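(* Let $G$ be Boidol's group and consider the coadjoint orbit space $\mathfrak{g}^*/G$ with its quotient topology, partitioned into the sets $\Gamma_3,\Gamma_2,\Gamma_1,\Gamma_0$ described in the context. Then: (i) the relative topology of $\mathfrak{g}^*/G$ on $\Gamma_3$ is Hausdorff; (ii) each of the four subsets $\Gamma_{2,\varepsilon,\sigma}$, $\varepsilon,\sigma\in\{+,-\}$, is open in $\Gamma_2$ and Hausdorff in its relative topology; (iii) $\Gamma_1$ is discrete in its relative topology; (iv) $\Gamma_0$ is homeomorphic to $\mathbb{R}$ (via $\tau\mapsto\{\tau T^*\}$).
   Context: Boidol's group $G$ is the simply connected Lie group with Lie algebra $\mathfrak{g}$ having basis $T,X,Y,Z$ and non-trivial brackets $[T,X]=-X$, $[T,Y]=Y$, $[X,Y]=Z$; concretely $G=\mathbb{R}^4$ with product $(t,x,y,z)\cdot(t',x',y',z')=(t+t',\,e^{t'}x+x',\,e^{-t'}y+y',\,z+z'+\tfrac12(e^{t'}xy'-e^{-t'}x'y))$. Write elements of $\mathfrak{g}^*$ as $aT^*+bX^*+cY^*+dZ^*$ (dual basis). $G$ acts on $\mathfrak{g}^*$ by the coadjoint action, and the coadjoint orbits are exactly: (1) for $\rho\in\mathbb{R},\lambda\in\mathbb{R}\setminus\{0\}$: $O_{\rho,\lambda}=\{\frac{\rho\lambda+xy}{\lambda}T^*+xX^*+yY^*+\lambda Z^*: x,y\in\mathbb{R}\}$; (2) for $(\alpha,\beta)\in\mathbb{R}^2\setminus\{0\}$: $O_{\alpha,\beta,0}=\{uT^*+e^t\alpha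 X^*+e^{-t}\beta Y^*: t,u\in\mathbb{R}\}$; (3) for $\tau\in\mathbb{R}$ the singletons $\{\tau T^*\}$. Set $\Gamma_3=\{O_{\rho,\lambda}:\rho\in\mathbb{R},\lambda\neq0\}$; for $\varepsilon,\sigma\in\{+,-\}$ (identified with $\pm1$), $\Gamma_{2,\varepsilon,\sigma}=\{O_{\varepsilon\rho,\sigma,0}:\rho>0\}$ and $\Gamma_2=\bigcup_{\varepsilon,\sigma}\Gamma_{2,\varepsilon,\sigma}$ (the orbits $O_{\alpha,\beta,0}$ with $\alpha\beta\neq0$); $\Gamma_1=\{O_{1,0,0},O_{-1,0,0},O_{0,1,0},O_{0,-1,0}\}$; $\Gamma_0=\{\{\tau T^*\}:\tau\in\mathbb{R}\}$. The orbit space $\mathfrak{g}^*/G$ carries the quotient topology of $\mathfrak{g}^*$. *)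

From HB Require Import structures.
From mathcomp Require Import all_boot all_order all_algebra.
From mathcomp Require Import all_classical all_reals all_analysis.
Set Implicit Arguments. Unset Strict Implicit. Unset Printing Implicit Defensive.
Import Order.TTheory GRing.Theory Num.Theory.
Import numFieldNormedType.Exports.
Local Open Scope classical_set_scope.
Local Open Scope ring_scope.

Section Boidol.
Variable R : realType.

Definition grp := (R * R * R * R)%type.
(* g = Lie algebra, coordinates (s,a,b,c) w.r.t. the basis T,X,Y,Z. *)
Definition lie := (R * R * R * R)%type.
(* g^* , coordinates (a,b,c,d) meaning aT^*+bX^*+cY^*+dZ^*. *)
Definition dual := (R * R * R * R)%type.

Definition gmul (g h : grp) : grp :=
  let: (t, x, y, z) := g in let: (t', x', y', z') := h in
  (t + t', expR t' * x + x', expR (- t') * y + y',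
   z + z' + 2^-1 * (expR t' * x * y' - expR (- t') * x' * y)).

Definition ginv (g : grp) : grp :=
  let: (t, x, y, z) := g in (- t, - (expR (- t) * x), - (expR t * y), - z).

(* Adjoint action Ad(g) = differential at the identity (0,0,0,0) of
   h |-> g h g^{-1}, written in the basis T,X,Y,Z (= d/dt,d/dx,d/dy,d/dz at
   the identity; the corresponding left invariant fields satisfy
   [T,X]=-X, [T,Y]=Y, [X,Y]=Z). *)
Definition Ad (g : grp) (v : lie) : lie :=
  let: (t, x, y, z) := g in let: (s, a, b, c) := v in
  (s, expR (- t) * (a + s * x), expR t * (b - s * y),
   c + x * b - a * y - s * x * y).

Definition pair_dl (l : dual) (v : lie) : R :=
  let: (a, b, c, d) := l in let: (s, a', b', c') := v in
  a * s + b * a' + c * b' + d * c'.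

Definition eT : lie := (1, 0, 0, 0).
Definition eX : lie := (0, 1, 0, 0).
Definition eY : lie := (0, 0, 1, 0).
Definition eZ : lie := (0, 0, 0, 1).

Definition coadj (g : grp) (l : dual) : dual :=
  let f := fun V => pair_dl l (Ad (ginv g) V) in (f eT, f eX, f eY, f eZ).

Definition orbit (l : dual) : set dual := [set coadj g l | g in [set: grp]].

Definition orbits : set (set dual) := [set O | exists l, O = orbit l].

Definition qopen (U : set (set dual)) : Prop :=
  U `<=` orbits /\ open [set l : dual | U (orbit l)].

Definition ropen (S V : set (set dual)) : Prop :=
  exists U, qopen U /\ V = U `&` S.

Definition rhausdorff (S : set (set dual)) : Prop :=
  forall O1 O2, S O1 -> S O2 -> O1 <> O2 ->
    exists U1 U2, [/\ qopen U1, qopen U2, U1 O1, U2 O2 & U1 `&` U2 `&` S = set0].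

Definition rdiscrete (S : set (set dual)) : Prop :=
  forall V, V `<=` S -> ropen S V.

Definition O_rl (rho lam : R) : set dual :=
  [set l | exists x y, l = ((rho * lam + x * y) / lam, x, y, lam)].
Definition O_ab (alpha beta : R) : set dual :=
  [set l | exists t u, l = (u, expR t * alpha, expR (- t) * beta, 0)].
Definition O_tau (tau : R) : set dual := [set (tau, 0, 0, 0)].

Definition sgn (b : bool) : R := if b then 1 else -1.

Definition Gamma3 : set (set dual) :=
  [set O | exists rho lam, lam != 0 /\ O = O_rl rho lam].
Definition Gamma2es (eps sig : bool) : set (set dual) :=
  [set O | exists rho, 0 < rho /\ O = O_ab (sgn eps * rho) (sgn sig)].
Definition Gamma2 : set (set dual) :=
  [set O | exists eps sig, Gamma2es eps sig O].
Definition Gamma1 : set (set dual) :=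
  [set O | O = O_ab 1 0 \/ O = O_ab (-1) 0 \/ O = O_ab 0 1 \/ O = O_ab 0 (-1)].
Definition Gamma0 : set (set dual) := [set O | exists tau, O = O_tau tau].

Definition homeo_onto (f : R -> set dual) (S : set (set dual)) : Prop :=
  [/\ injective f, f @` [set: R] = S,
      (forall V, ropen S V -> open (f @^-1` V)) &
      (forall W : set R, open W -> ropen S (f @` W))].

End Boidol.

(* The coadjoint action is by affine homeomorphisms of g^*, so the orbits
   meeting an open subset of g^* form an open set of g^*/G, and a continuous
   function on g^* that is constant on the orbits of a family separates any two
   of them on which it takes different values.  On Gamma_3 the invariants
   d = lambda and ad - bc = rho lambda do this, on Gamma_{2,eps,sig} the
   invariant bc = alpha beta.  Along O_{alpha,beta,0} the coordinates
   b = e^t alpha and c = e^{-t} beta keep the signs of alpha and beta, so the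
   quadrant {eps b > 0, sig c > 0} cuts Gamma_{2,eps,sig} out of Gamma_2 and the
   half-plane {alpha b + beta c > 0} isolates O_{alpha,beta,0} in Gamma_1.
   On Gamma_0 the T^*-coordinate recovers tau. *)

From Pilot Require Import Defs.
From mathcomp Require Import all_boot all_order all_algebra.
From mathcomp Require Import all_classical all_reals all_analysis.
From mathcomp Require Import ring lra.
Import Order.TTheory GRing.Theory Num.Theory.
Import numFieldNormedType.Exports.
Local Open Scope classical_set_scope.
Local Open Scope ring_scope.

Set Implicit Arguments.
Unset Strict Implicit.

Section ContinuousFunctions.
Context {T U V : topologicalType}.

Lemma fst_comp_continuous (f : T -> U * V) :
  continuous f -> continuous (fun x => (f x).1).
Proof. by move=> cf x; apply: continuous_comp (cf x) _; apply: cvg_fst. Qed.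

Lemma snd_comp_continuous (f : T -> U * V) :
  continuous f -> continuous (fun x => (f x).2).
Proof. by move=> cf x; apply: continuous_comp (cf x) _; apply: cvg_snd. Qed.

Lemma pair_continuous (f : T -> U) (g : T -> V) :
  continuous f -> continuous g -> continuous (fun x => (f x, g x)).
Proof. by move=> cf cg x; exact: cvg_pair (cf x) (cg x). Qed.

Lemma fst_continuous : continuous (@fst U V).
Proof. by move=> ?; apply: cvg_fst. Qed.

Lemma snd_continuous : continuous (@snd U V).
Proof. by move=> ?; apply: cvg_snd. Qed.

Variable K : numFieldType.
Implicit Types f g : T -> K.

Lemma continuous_add f g :
  continuous f -> continuous g -> continuous (fun x => f x + g x).
Proof. by move=> cf cg x; exact: continuousD (cf x) (cg x). Qed.

Lemma continuous_sub f g :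
  continuous f -> continuous g -> continuous (fun x => f x - g x).
Proof. by move=> cf cg x; exact: continuousB (cf x) (cg x). Qed.

Lemma continuous_mul f g :
  continuous f -> continuous g -> continuous (fun x => f x * g x).
Proof. by move=> cf cg x; exact: continuousM (cf x) (cg x). Qed.

End ContinuousFunctions.

(* [f x - g x] unfolds to [f x + - g x], so subtraction must be tried before
   addition. *)
Ltac continuity := repeat match goal with
  | |- continuous (fun _ => (_, _)) => apply: pair_continuous
  | |- continuous (fun _ => _ - _) => apply: continuous_sub
  | |- continuous (fun _ => _ + _) => apply: continuous_add
  | |- continuous (fun _ => _ * _) => apply: continuous_mul
  | |- continuous (fun _ => _.1) => apply: fst_comp_continuous
  | |- continuous (fun _ => _.2) => apply: snd_comp_continuous
  | |- continuous (fun x => x) => by move=> ?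
  | |- continuous fst => exact: fst_continuous
  | |- continuous snd => exact: snd_continuous
  | |- continuous (fun _ => _) => exact: cst_continuous
  end.

Section Boidol.
Variable R : realType.
Implicit Types (rho lam a b k : R) (l : dual R) (g : grp R).
(* Plain [orbit] would resolve to the orbit of a function from fingraph. *)
Local Notation orbit := (@Defs.orbit R).

Lemma coadjE g l : coadj g l =
  (l.1.1.1 - l.1.1.2 * g.1.1.2 + l.1.2 * g.1.2 - l.2 * g.1.1.2 * g.1.2,
   expR g.1.1.1 * (l.1.1.2 + l.2 * g.1.2),
   expR (- g.1.1.1) * (l.1.2 - l.2 * g.1.1.2), l.2).
Proof.
case: g => [[[t x] y] z]; case: l => [[[a b] c] d].
rewrite /coadj /ginv /Ad /pair_dl /eT /eX /eY /eZ /= !opprK !expRN.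
have et : expR t != 0 by rewrite gt_eqF ?expR_gt0.
by congr (_, _, _, _); field.
Qed.

Lemma coadj_continuous g : continuous (coadj g).
Proof. by rewrite (funext (coadjE g)); continuity. Qed.

Lemma open_gt0 (T : topologicalType) (f : T -> R) :
  continuous f -> open [set x | 0 < f x].
Proof. by move=> cf; apply: (continuousP f).1 cf _ (@open_gt _ 0). Qed.

Definition orbits_meeting (V : set (dual R)) : set (set (dual R)) :=
  [set O | orbits O /\ exists2 l, O l & V l].

Lemma qopen_orbits_meeting V : open V -> qopen (orbits_meeting V).
Proof.
move=> oV; split; first by move=> O [].
have -> : [set l | orbits_meeting V (orbit l)] =
          \bigcup_(g in [set: grp R]) coadj g @^-1` V.
  apply/seteqP; split=> l /=.
  - by move=> [_ [_ [g _ <-] Vgl]]; exists g.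
  - move=> [g _ Vgl]; split; first by exists l.
    by exists (coadj g l) => //; exists g.
by apply: bigcup_open => g _; apply: (continuousP _).1 oV; apply: coadj_continuous.
Qed.

Lemma qopen_bigcup (F : set (set (set (dual R)))) :
  (forall U, F U -> qopen U) -> qopen (\bigcup_(U in F) U).
Proof.
move=> qF; split; first by move=> O [U /qF [sU _] /sU].
by apply: bigcup_open => U /qF [].
Qed.

Lemma separate_by_invariant (S : set (set (dual R))) (psi : dual R -> R)
    O1 O2 l1 l2 :
  orbits O1 -> orbits O2 -> O1 l1 -> O2 l2 -> continuous psi ->
  (forall O l l', S O -> O l -> O l' -> psi l = psi l') -> psi l1 != psi l2 ->
  exists U1 U2, [/\ qopen U1, qopen U2, U1 O1, U2 O2 & U1 `&` U2 `&` S = set0].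
Proof.
move=> + + + + psi_cont psi_inv.
wlog lt12 : O1 O2 l1 l2 / psi l1 < psi l2 => [sep o1 o2 O1l1 O2l2|o1 o2 O1l1 O2l2 _].
  rewrite neq_lt => /orP[lt12|lt21].
    exact: sep lt12 o1 o2 O1l1 O2l2 (negbT (lt_eqF lt12)).
  have [U2 [U1 [qU2 qU1 U2O2 U1O1 disj]]] :=
    sep _ _ _ _ lt21 o2 o1 O2l2 O1l1 (negbT (lt_eqF lt21)).
  by exists U1, U2; split => //; rewrite (setIC U1).
pose m := (psi l1 + psi l2) / 2.
exists (orbits_meeting [set l | psi l < m]), (orbits_meeting [set l | m < psi l]).
split.
- exact/qopen_orbits_meeting/((continuousP _).1 psi_cont _ (@open_lt _ m)).
- exact/qopen_orbits_meeting/((continuousP _).1 psi_cont _ (@open_gt _ m)).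
- by split=> //; exists l1 => //=; rewrite /m; lra.
- by split=> //; exists l2 => //=; rewrite /m; lra.
apply/seteqP; split=> // O [[[_ [l Ol lt]] [_ [l' Ol' gt]]] SO] /=.
by move: (psi_inv _ _ _ SO Ol Ol') lt gt => /= ->; lra.
Qed.

Lemma rdiscrete_isolated (S : set (set (dual R))) :
  (forall O, S O -> exists U, qopen U /\ U `&` S = [set O]) -> rdiscrete S.
Proof.
move=> iso V VS.
exists (\bigcup_(U in [set U | qopen U /\ exists2 O, V O & U `&` S = [set O]]) U).
split; first by apply: qopen_bigcup => U [].
apply/seteqP; split => [Q VQ | Q [[U [_ [Q1 VQ1 US]] UQ] SQ]].
- have [U [qU US]] := iso Q (VS Q VQ).
  have [UQ _] : (U `&` S) Q by rewrite US.
  by split; [exists U => //; split => //; exists Q | exact: VS].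
- by have : (U `&` S) Q by []; rewrite US => ->.
Qed.

Lemma orbit_O_rl rho lam : lam != 0 -> O_rl rho lam = orbit (rho, 0, 0, lam).
Proof.
move=> lam0; apply/seteqP; split=> l.
- move=> [x [y ->]]; exists (0, - (y / lam), x / lam, 0) => //.
  by rewrite coadjE /= oppr0 expR0 !mul1r; congr (_, _, _, _); field.
- move=> [[[[t x] y] z] _ <-]; rewrite coadjE /=.
  exists (expR t * (lam * y)), (expR (- t) * (- (lam * x))).
  have et : expR t != 0 by rewrite gt_eqF ?expR_gt0.
  by rewrite expRN; congr (_, _, _, _); field; rewrite ?lam0 ?et.
Qed.

Lemma orbit_O_ab a b : (a != 0) || (b != 0) -> O_ab a b = orbit (0, a, b, 0).
Proof.
move=> ab0; apply/seteqP; split=> l.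
- move=> [t [u ->]]; have [a0|a0] := eqVneq a 0.
  + have b0 : b != 0 by rewrite a0 eqxx in ab0.
    by exists (t, 0, u / b, 0) => //; rewrite coadjE /= a0; congr (_, _, _, _); field.
  + by exists (t, - (u / a), 0, 0) => //; rewrite coadjE /=; congr (_, _, _, _); field.
- move=> [[[[t x] y] z] _ <-]; rewrite coadjE /=.
  by exists t, (b * y - a * x); congr (_, _, _, _); ring.
Qed.

Lemma orbit_O_tau tau : O_tau tau = orbit (tau, 0, 0, 0).
Proof.
apply/seteqP; split=> l.
- by move=> ->; exists 0 => //; rewrite coadjE /=; congr (_, _, _, _); ring.
- by move=> [g _ <-]; rewrite coadjE /O_tau /=; congr (_, _, _, _); ring.
Qed.

Lemma orbits_O_rl rho lam : lam != 0 -> orbits (O_rl rho lam).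
Proof. by move=> lam0; exists (rho, 0, 0, lam); apply: orbit_O_rl. Qed.

Lemma orbits_O_ab a b : (a != 0) || (b != 0) -> orbits (O_ab a b).
Proof. by move=> ab0; exists (0, a, b, 0); apply: orbit_O_ab. Qed.

Lemma O_rl_basepoint rho lam : lam != 0 -> O_rl rho lam (rho, 0, 0, lam).
Proof. by move=> lam0; exists 0, 0; rewrite mulr0 addr0 mulfK. Qed.

Lemma O_ab_basepoint a b : O_ab a b (0, a, b, 0).
Proof. by exists 0, 0; rewrite oppr0 expR0 !mul1r. Qed.

Lemma O_rl_invariants rho lam l : lam != 0 -> O_rl rho lam l ->
  l.2 = lam /\ l.1.1.1 * l.2 - l.1.1.2 * l.1.2 = rho * lam.
Proof. by move=> lam0 [x [y ->]]; rewrite /= divfK // addrK. Qed.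

Lemma O_ab_invariant a b l : O_ab a b l -> l.1.1.2 * l.1.2 = a * b.
Proof. by move=> [t [u ->]] /=; rewrite mulrACA expRxMexpNx_1 mul1r. Qed.

Lemma O_ab_gt0 k a b l : O_ab a b l ->
  (0 < k * l.1.1.2) = (0 < k * a) /\ (0 < k * l.1.2) = (0 < k * b).
Proof.
by move=> [t [u ->]]; split; rewrite /= mulrCA pmulr_rgt0 ?expR_gt0.
Qed.

Lemma O_ab_isolated (S : set (set (dual R))) a b :
  0 < a * a + b * b -> S (O_ab a b) ->
  (forall O l, S O -> O l -> 0 < a * l.1.1.2 + b * l.1.2 -> O = O_ab a b) ->
  exists U, qopen U /\ U `&` S = [set O_ab a b].
Proof.
move=> ab_gt0 Sab iso.
have ab0 : (a != 0) || (b != 0).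
  rewrite -negb_and; apply: contraTN ab_gt0 => /andP[/eqP-> /eqP->].
  by rewrite mul0r addr0 ltxx.
exists (orbits_meeting [set l | 0 < a * l.1.1.2 + b * l.1.2]); split.
  by apply: qopen_orbits_meeting; apply: open_gt0; continuity.
apply/seteqP; split=> [Q [[_ [l Ql fl]] SQ] | Q ->]; first exact: iso Ql fl.
split=> //; split; first exact: orbits_O_ab.
by exists (0, a, b, 0); first exact: O_ab_basepoint.
Qed.

Lemma Gamma3_hausdorff : rhausdorff (@Gamma3 R).
Proof.
move=> _ _ [r1 [k1 [k1_0 ->]]] [r2 [k2 [k2_0 ->]]] neq.
have sep psi := separate_by_invariant (S := @Gamma3 R) (psi := psi)
  (orbits_O_rl r1 k1_0) (orbits_O_rl r2 k2_0)
  (O_rl_basepoint r1 k1_0) (O_rl_basepoint r2 k2_0).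
have [ek|k12] := eqVneq k1 k2.
- apply: (sep (fun l => l.1.1.1 * l.2 - l.1.1.2 * l.1.2)).
  + by continuity.
  + by move=> _ l l' [r [k [k0 ->]]] /(O_rl_invariants k0)[_ ->] /(O_rl_invariants k0)[_ ->].
  + rewrite /= !mulr0 !subr0 -ek (inj_eq (mulIf k1_0)).
    by apply/eqP => er; apply: neq; rewrite er ek.
- apply: (sep snd) => //; first by continuity.
  by move=> _ l l' [r [k [k0 ->]]] /(O_rl_invariants k0)[-> _] /(O_rl_invariants k0)[-> _].
Qed.

Lemma sgn_neq0 e : sgn R e != 0.
Proof. by case: e; rewrite /= ?oppr_eq0 oner_eq0. Qed.

Lemma sgn_mul_gt0 e e' : (0 < sgn R e * sgn R e') = (e == e').
Proof.
by case: e; case: e'; rewrite /= ?mulN1r ?mul1r ?opprK ?ltr01 ?oppr_gt0 ?ltr10.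
Qed.

Lemma Gamma2es_open eps sig : ropen (@Gamma2 R) (@Gamma2es R eps sig).
Proof.
exists (orbits_meeting [set l | 0 < sgn R eps * l.1.1.2 /\ 0 < sgn R sig * l.1.2]).
split.
  by apply: qopen_orbits_meeting; apply: openI; apply: open_gt0; continuity.
apply/seteqP; split=> O.
- move=> [rho [rho0 ->]]; split; last by exists eps, sig, rho.
  split; first by apply: orbits_O_ab; rewrite sgn_neq0 orbT.
  exists (0, sgn R eps * rho, sgn R sig, 0); first exact: O_ab_basepoint.
  by rewrite /= mulrA pmulr_lgt0 // !sgn_mul_gt0.
- move=> [[_ [l Ol [b_gt0 c_gt0]]] [e [s [rho [rho0 eO]]]]].
  rewrite eO in Ol *.
  move: b_gt0 c_gt0; rewrite (O_ab_gt0 _ Ol).1 (O_ab_gt0 _ Ol).2.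
  rewrite mulrA pmulr_lgt0 // !sgn_mul_gt0 => /eqP<- /eqP<-.
  by exists rho.
Qed.

Lemma Gamma2es_hausdorff eps sig : rhausdorff (@Gamma2es R eps sig).
Proof.
move=> _ _ [r1 [r1_0 ->]] [r2 [r2_0 ->]] neq.
have ab0 r : (sgn R eps * r != 0) || (sgn R sig != 0) by rewrite sgn_neq0 orbT.
apply: (separate_by_invariant (psi := fun l => l.1.1.2 * l.1.2)
  (orbits_O_ab (ab0 r1)) (orbits_O_ab (ab0 r2)) (O_ab_basepoint _ _) (O_ab_basepoint _ _)).
- by continuity.
- by move=> _ l l' [r [_ ->]] /O_ab_invariant -> /O_ab_invariant ->.
- rewrite /= (inj_eq (mulIf (sgn_neq0 sig))) (inj_eq (mulfI (sgn_neq0 eps))).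
  by apply/eqP => er; apply: neq; rewrite er.
Qed.

Lemma Gamma1_isolated O :
  Gamma1 O -> exists U, qopen U /\ U `&` @Gamma1 R = [set O].
Proof.
move=> G1O; case: (G1O) => [|[|[|]]] eO; subst O.
all: apply: O_ab_isolated => //; clear G1O.
(* On O_{a',b',0} the test function is a a' e^t + b b' e^{-t}, positive only
   when (a', b') = (a, b). *)
all: move=> _ l [|[|[|]]] -> [t [u ->]] /= pos.
all: first [done | exfalso; have := expR_gt0 t; have := expR_gt0 (- t); lra].
Qed.

Lemma O_tau_homeo : homeo_onto (@O_tau R) (@Gamma0 R).
Proof.
split.
- by move=> t t' tt'; have [] : O_tau t' (t, 0, 0, 0) by rewrite -tt'.
- by apply/seteqP; split=> [_ [t _ <-]|_ [t ->]]; exists t.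
- move=> _ [U [[_ oU] ->]].
  have -> : @O_tau R @^-1` (U `&` @Gamma0 R) =
            (fun t => (t, 0, 0, 0)) @^-1` [set l | U (orbit l)].
    apply/seteqP; split=> t /=; rewrite -orbit_O_tau; first by case.
    by split=> //; exists t.
  by apply: (continuousP _).1 oU; continuity.
- move=> W oW; exists (orbits_meeting [set l | W l.1.1.1]); split.
    by apply: qopen_orbits_meeting; apply: (continuousP _).1 oW; continuity.
  apply/seteqP; split=> [_ [t Wt <-]|O [[_ [l Ol Wl]] [t eO]]].
  + split; last by exists t.
    split; first by exists (t, 0, 0, 0); apply: orbit_O_tau.
    by exists (t, 0, 0, 0).
  + by move: Ol Wl; rewrite eO => ->; exists t.
Qed.

End Boidol.

Theorem proposition2p2 (R : realType) :
  [/\ @rhausdorff R (@Gamma3 R),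
      (forall eps sig : bool,
         @Gamma2es R eps sig `<=` @Gamma2 R /\
         @ropen R (@Gamma2 R) (@Gamma2es R eps sig) /\
         @rhausdorff R (@Gamma2es R eps sig)),
      @rdiscrete R (@Gamma1 R) &
      @homeo_onto R (@O_tau R) (@Gamma0 R)].
Proof.
split.
- exact: Gamma3_hausdorff.
- move=> eps sig; split; first by move=> O; exists eps, sig.
  by split; [exact: Gamma2es_open | exact: Gamma2es_hausdorff].
- exact/rdiscrete_isolated/Gamma1_isolated.
- exact: O_tau_homeo.
Qed.
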